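(* Let Assumptions (A1), (A3), (A4) and (A15) below hold, let $C\in\mathbb{R}$, and assume that $\Pi^\star$ is minimal. Then there exist $N_0\in\mathbb{N}$ and $\delta_2\in\mathcal L$ such that for all $x,y\in\mathbb{X}_{\mathrm{pi}}(C,N_0)$ and all $N\ge N_0$ $$\tilde V_N^\beta(y)-\lambda(y)-\tilde V_N^\beta(x)+\lambda(x)\le V_N^\beta(y)-V_N^\beta(x)+\delta_2(N).$$
   Context: System $x(k+1)=f(x(k),u(k))$ with constraint sets $\mathbb{X}\subset\mathbb{R}^n$, $\mathbb{U}\subset\mathbb{R}^m$ and stage cost $\ell:\mathbb{X}\times\mathbb{U}\to\mathbb{R}$, which is assumed non-negative. For $u\in\mathbb{U}^T$, $x_u(0,x)=x$, $x_u(k+1,x)=f(x_u(k,x),u(k))$; $\mathbb{U}^T(x)$ is the set of $u\in\mathbb{U}^T$ with $x_u(k,x)\in\mathbb{X}$ for $k=0,\dots,T$. A feasible $p$-periodic orbit is $\Pi\in(\mathbb{X}\times\mathbb{U})^p$ with $\Pi_\mathbb{X}([k+1]_p)=f(\Pi(k))$ ($[k]_p$ = $k$ mod $p$); it is minimal if $\Pi_\mathbb{X}(k)=\Pi_\mathbb{X}(j)$ implies $k=j$. $\|(x,u)\|_\Pi:=\min_k\|(x,u)-\Pi(k)\|$, $\|x\|_{\Pi_\mathbb{X}}:=\min_k\|x-\Pi_\mathbb{X}(k)\|$; $\ell^\star:=\inf$ over all feasible periodic orbits of $\frac1p\sum_{k=0}^{p-1}\ell(\Pi(k))$; $\Pi^\star$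 is a fixed feasible $p^\star$-periodic orbit attaining $\ell^\star$. $\mathcal L$: continuous decreasing functions $[0,\infty)\to[0,\infty)$ tending to $0$. (A1) $f,\ell$ continuous, $\mathbb{X},\mathbb{U}$ compact. (A3) There are $\lambda:\mathbb{X}\to\mathbb{R}$, $\bar\lambda$ with $|\lambda|\le\bar\lambda$ on $\mathbb{X}$, and $\underline\alpha_{\tilde\ell}\in\mathcal K_\infty$ such that $\tilde\ell(x,u):=\ell(x,u)-\ell^\star+\lambda(x)-\lambda(f(x,u))\ge\underline\alpha_{\tilde\ell}(\|(x,u)\|_{\Pi^\star})$ for all $x\in\mathbb{X}$, $u\in\mathbb{U}^1(x)$. (A4) There are $\kappa>0$, $M'\in\mathbb{N}$, $\rho\in\mathcal K_\infty$ such that for all $z\in\{\Pi^\star_\mathbb{X}(k)\}$ and $x,y\in\mathbb{X}$ with $\|x-z\|,\|y-z\|\le\kappa$ there is $u\in\mathbb{U}^{M'}(x)$ with $x_u(M',x)=y$ and $\|(x_u(k,x),u(k))\|_{\Pi^\star}\le\rho(\max\{\|x\|_{\Pi^\star_\mathbb{X}},\|y\|_{\Pi^\star_\mathbb{X}}\})$ for $k=0,\dots,M'-1$. (A15) $\lambda$ is continuous and there is $\overline\alpha_\lambda\in\mathcal K_\infty$ with $|\lambda(x)-\lambda(\Pi^\star_\mathbb{X}(k))|\le\overline\alpha_\lambda(\|x-\Pi^\star_\mathbb{X}(k)\|)$ for all $x\in\mathbb{X}$, $k=0,\dots,p^\star-1$. Discounted MPC: $\beta_N(k)=\frac{N-k}{N}$,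 $V_N^\beta(x)=\inf_{u\in\mathbb{U}^N(x)}\sum_{k=0}^{N-1}\beta_N(k)\ell(x_u(k,x),u(k))$ and $\tilde V_N^\beta(x)=\inf_{u\in\mathbb{U}^N(x)}\sum_{k=0}^{N-1}\beta_N(k)\tilde\ell(x_u(k,x),u(k))$. $\mathbb{X}_{\mathrm{pi}}(C,N_0)$ is the set of $x\in\mathbb{X}$ with $V_N^\beta(x)-\frac{N+1}{2}\ell^\star+\lambda(x)+\bar\lambda\le C$ for all $N\ge N_0$. *)

From HB Require Import structures.
From mathcomp Require Import all_boot all_order all_algebra.
From mathcomp Require Import all_classical all_reals all_analysis.
Set Implicit Arguments. Unset Strict Implicit. Unset Printing Implicit Defensive.
Import Order.TTheory GRing.Theory Num.Theory.
Import numFieldNormedType.Exports.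
Local Open Scope classical_set_scope.
Local Open Scope ring_scope.

Section Defs.
Variables (R : realType) (n m : nat).
Notation st := 'rV[R]_n.
Notation inp := 'rV[R]_m.

Definition pnorm (z : st * inp) : R := Num.max `|z.1| `|z.2|.

Fixpoint traj (f : st -> inp -> st) (u : nat -> inp) (x : st) (k : nat) : st :=
  match k with
  | 0 => x
  | k'.+1 => f (traj f u x k') (u k')
  end.

(* U^T(x): only the first T inputs matter *)
Definition admissible (f : st -> inp -> st) (X : set st) (U : set inp)
  (T : nat) (x : st) (u : nat -> inp) : Prop :=
  (forall k, (k < T)%N -> U (u k)) /\ (forall k, (k <= T)%N -> X (traj f u x k)).

Definition feasible_orbit (f : st -> inp -> st) (X : set st) (U : set inp)
  (p : nat) (Pi : nat -> st * inp) : Prop :=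
  (0 < p)%N /\
  (forall k, (k < p)%N -> X (Pi k).1 /\ U (Pi k).2) /\
  (forall k, (k < p)%N -> (Pi ((k.+1) %% p)%N).1 = f (Pi k).1 (Pi k).2).

Definition minimal_orbit (p : nat) (Pi : nat -> st * inp) : Prop :=
  forall k j, (k < p)%N -> (j < p)%N -> (Pi k).1 = (Pi j).1 -> k = j.

Definition avg_cost (ell : st -> inp -> R) (p : nat) (Pi : nat -> st * inp) : R :=
  (\sum_(k < p) ell (Pi k).1 (Pi k).2) / p%:R.

Definition dist_orbit (p : nat) (Pi : nat -> st * inp) (z : st * inp) : R :=
  \big[Num.min/pnorm (z.1 - (Pi 0%N).1, z.2 - (Pi 0%N).2)]_(k < p)
     pnorm (z.1 - (Pi k).1, z.2 - (Pi k).2).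

Definition dist_orbitX (p : nat) (Pi : nat -> st * inp) (x : st) : R :=
  \big[Num.min/`|x - (Pi 0%N).1|]_(k < p) `|x - (Pi k).1|.

Definition betaN (N k : nat) : R := (N - k)%:R / N%:R.

Definition VNbeta (f : st -> inp -> st) (X : set st) (U : set inp)
  (ell : st -> inp -> R) (N : nat) (x : st) : \bar R :=
  ereal_inf ((fun u : nat -> inp =>
     (\sum_(k < N) betaN N k * ell (traj f u x k) (u k))%:E)
     @` [set u | admissible f X U N x u]).

Definition ell_tilde (f : st -> inp -> st) (ell : st -> inp -> R) (ellstar : R)
  (lam : st -> R) (x : st) (u : inp) : R :=
  ell x u - ellstar + lam x - lam (f x u).

Definition Xpi (f : st -> inp -> st) (X : set st) (U : set inp)
  (ell : st -> inp -> R) (ellstar : R) (lam : st -> R) (lambar C : R) (N0 : nat)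
  : set st :=
  [set x | X x /\ forall N, (N0 <= N)%N ->
     (VNbeta f X U ell N x + (- ((N%:R + 1) / 2 * ellstar) + lam x + lambar)%:E
       <= C%:E)%E].

End Defs.

Definition Kinf (R : realType) (a : R -> R) : Prop :=
  {within [set r : R | 0 <= r], continuous a} /\ a 0 = 0 /\
  (forall r s, 0 <= r -> r < s -> a r < a s) /\
  (forall M, exists r, 0 <= r /\ M <= a r).

Definition classL (R : realType) (d : R -> R) : Prop :=
  {within [set r : R | 0 <= r], continuous d} /\
  (forall r, 0 <= r -> 0 <= d r) /\
  (forall r s, 0 <= r -> r < s -> d s < d r) /\
  (d r @[r --> +oo] --> 0).

From HB Require Import structures.
From mathcomp Require Import all_boot all_order all_algebra.
From mathcomp Require Import all_classical all_reals all_analysis.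
From mathcomp Require Import ring lra zify.
Import Order.TTheory GRing.Theory Num.Theory.
Import numFieldNormedType.Exports.
Local Open Scope classical_set_scope.
Local Open Scope ring_scope.

(* Telescoping the rotation term, the rotated cost of an input sequence of
   length N from x is its cost, minus l* (N + 1) / 2, plus lambda x, minus the
   average of lambda along the trajectory.  Comparing near-optimal inputs, the
   theorem reduces to showing that this average tends to lambda*, the mean of
   lambda over Pi*, uniformly over trajectories of bounded rotated cost.  By
   (A3) and the discount weights such a trajectory spends all but o(N) of its
   steps near Pi*.  Minimality separates the points of Pi*, and continuity of f
   sends a step near Pi*(j) near Pi*(j + 1); hence a locally constant corrector
   h built from the partial sums of lambda - lambda* along Pi* satisfies
   lambda(x_k) - lambda* = h(x_(k+1)) - h(x_k) + O(alpha_lambda(d)) on those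
   steps, and the average telescopes.  The resulting uniform rate is finally
   majorised by a class-L function. *)

Set Implicit Arguments.
Unset Strict Implicit.
Unset Printing Implicit Defensive.

Section Discount.
Variable R : realType.

Lemma betaN_ge0 N k : 0 <= betaN R N k.
Proof. by rewrite /betaN divr_ge0. Qed.

Lemma sum_betaN N : (0 < N)%N -> \sum_(k < N) betaN R N k = (N%:R + 1) / 2.
Proof.
move=> N_gt0; rewrite /betaN -mulr_suml.
have sum_rev M : \sum_(k < M) (M - k)%:R = M%:R * (M%:R + 1) / 2 :> R.
  elim: M => [|M IH]; first by rewrite big_ord0 !mul0r.
  rewrite big_ord_recl /= subn0.
  under eq_bigr => i _ do rewrite /bump /= add1n subSS.
  by rewrite IH -addn1 natrD; field.
by rewrite sum_rev; field; rewrite pnatr_eq0 -lt0n.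
Qed.

Lemma sum_betaN_telescope (a : nat -> R) N : (0 < N)%N ->
  \sum_(k < N) betaN R N k * (a k - a k.+1) =
  a 0%N - (\sum_(k < N) a k.+1) / N%:R.
Proof.
move=> N_gt0; have N_neq0 : N%:R != 0 :> R by rewrite pnatr_eq0 -lt0n.
have termE (k : 'I_N) : betaN R N k * (a k - a k.+1) =
    ((N - k)%:R * a k - (N - k.+1)%:R * a k.+1 - a k.+1) / N%:R.
  rewrite /betaN (natrB _ (ltnW (ltn_ord k))) (natrB _ (ltn_ord k)).
  by rewrite -addn1 natrD mulrAC; congr (_ / _); ring.
rewrite (eq_bigr _ (fun k _ => termE k)) -mulr_suml big_split sumrN /=.
have tele : \sum_(k < N) ((N - k)%:R * a k - (N - k.+1)%:R * a k.+1) =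
    N%:R * a 0%N.
  have := telescope_sumr (fun k => (N - k)%:R * a k) (leq0n N).
  rewrite big_mkord subnn subn0 mul0r sub0r => tele.
  by rewrite -[RHS]opprK -tele -sumrN; apply: eq_bigr => k _; rewrite opprB.
by rewrite tele mulrBl mulrAC mulfV // mul1r.
Qed.

Lemma sum_tail_indicator_le N M :
  \sum_(k < N) (if (N <= k + M)%N then 1 else 0 : R) <= M%:R.
Proof.
have count_ge c P : \sum_(k < P) (if (c <= k)%N then 1 else 0 : R) <= (P - c)%:R.
  elim: P => [|P IH]; first by rewrite big_ord0.
  rewrite big_ord_recr /=; case: (leqP c P) => cP.
    by rewrite subSn // -addn1 natrD lerD2r.
  by rewrite addr0 (le_trans IH) // ler_nat; lia.
apply: le_trans (le_trans (count_ge (N - M)%N N) _); last by rewrite ler_nat; lia.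
by apply: ler_sum => k _; rewrite leq_subLR addnC.
Qed.

(* Under the weights beta_N, every step k with k + M < N weighs at least M/N;
   so at most N B / (M alpha) such steps can carry a cost >= alpha. *)
Lemma sum_dichotomy_le N M (eps K alpha B : R) (e c : nat -> R) :
  (0 < M)%N -> 0 < alpha -> 0 <= eps -> 0 <= K ->
  (forall k, (k < N)%N -> 0 <= c k) ->
  (forall k, (k < N)%N -> `|e k| <= eps \/ `|e k| <= K /\ alpha <= c k) ->
  \sum_(k < N) betaN R N k * c k <= B ->
  \sum_(k < N) `|e k| <= N%:R * eps + K * (N%:R / (M%:R * alpha) * B + M%:R).
Proof.
move=> M_gt0 alpha_gt0 eps_ge0 K_ge0 c_ge0 e_dich sumB.
have M_pos : 0 < M%:R :> R by rewrite ltr0n.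
have s_ge0 : 0 <= N%:R / (M%:R * alpha) :> R by rewrite divr_ge0 // ltW ?mulr_gt0.
pose w k := N%:R / (M%:R * alpha) * (betaN R N k * c k) +
  (if (N <= k + M)%N then 1 else 0).
have e_le (k : 'I_N) : `|e k| <= eps + K * w k.
  have kN := ltn_ord k.
  have bc_ge0 : 0 <= N%:R / (M%:R * alpha) * (betaN R N k * c k).
    by rewrite mulr_ge0 // mulr_ge0 ?betaN_ge0 ?c_ge0.
  have [e_small|[e_le_K c_big]] := e_dich k kN.
    have w_ge0 : 0 <= w k by rewrite addr_ge0 //; case: ifP.
    by apply: le_trans e_small _; rewrite lerDl mulr_ge0.
  suff w_ge1 : 1 <= w k.
    by have := ler_wpM2l K_ge0 w_ge1; rewrite mulr1; lra.
  rewrite /w; case: ifPn => [_|]; first by lra.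
  rewrite -ltnNge addr0 => kMN.
  have -> : N%:R / (M%:R * alpha) * (betaN R N k * c k) =
      (N - k)%:R / M%:R * (c k / alpha).
    by rewrite /betaN; field; rewrite (gt_eqF alpha_gt0) (gt_eqF M_pos) pnatr_eq0;
       apply/eqP; lia.
  by rewrite -[1]mulr1 ler_pM // ?ler_pdivlMr // ?mul1r // ?ler_nat; lia.
apply: le_trans (ler_sum _ (fun k _ => e_le k)) _.
rewrite big_split /= sumr_const card_ord -mulr_sumr [N%:R * eps]mulr_natl.
rewrite lerD2l ler_wpM2l // big_split /= -mulr_sumr.
by rewrite lerD ?ler_wpM2l ?sum_tail_indicator_le.
Qed.

End Discount.

Section Comparison.
Variable R : realType.

Lemma Kinf_ge0 (a : R -> R) r : Kinf a -> 0 <= r -> 0 <= a r.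
Proof.
move=> [_ [a0 [a_incr _]]]; rewrite le_eqVlt => /predU1P[<-|r_gt0].
  by rewrite a0.
by rewrite -a0 ltW // a_incr.
Qed.

Lemma Kinf_gt0 (a : R -> R) r : Kinf a -> 0 < r -> 0 < a r.
Proof. by move=> [_ [a0 [a_incr _]]] r_gt0; rewrite -a0 a_incr. Qed.

Lemma Kinf_le (a : R -> R) r s : Kinf a -> 0 <= r -> r <= s -> a r <= a s.
Proof.
move=> [_ [_ [a_incr _]]] r_ge0; rewrite le_eqVlt => /predU1P[->//|rs].
by rewrite ltW // a_incr.
Qed.

Lemma Kinf_small (a : R -> R) e d0 : Kinf a -> 0 < e -> 0 < d0 ->
  exists d, [/\ 0 < d, d <= d0 & a d <= e].
Proof.
move=> [a_cont [a0 _]] e_gt0 d0_gt0.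
have /subspace_continuousP /(_ 0 (lexx 0)) /cvg_ballP /(_ e e_gt0) := a_cont.
rewrite near_withinE => /nbhs_ballP [r /= r_gt0 near0].
have r2_gt0 : 0 < r / 2 by rewrite divr_gt0.
exists (Num.min (r / 2) d0); split; rewrite ?lt_min ?r2_gt0 ?ge_min ?lexx ?orbT //.
set d := Num.min _ _.
have d_ge0 : 0 <= d by rewrite le_min !ltW.
have d_lt_r : d < r.
  by apply: le_lt_trans (_ : r / 2 < r); rewrite ?ge_min ?lexx // ltr_pdivrMr //; lra.
have : ball (0 : R) r d by rewrite -ball_normE /= sub0r normrN ger0_norm.
move=> /near0 /(_ d_ge0); rewrite /from_subspace -ball_normE /= a0 sub0r normrN.
by move=> /(le_lt_trans (ler_norm _)) /ltW.
Qed.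

Lemma uniform_threshold (p : nat) (Q : nat -> R -> Prop) :
  (forall i, (i < p)%N ->
     exists2 g, 0 < g & forall g', 0 < g' -> g' <= g -> Q i g') ->
  exists2 g, 0 < g & forall i, (i < p)%N -> Q i g.
Proof.
elim: p Q => [|p IH] Q Qthr; first by exists 1.
have [g1 g1_gt0 Hg1] : exists2 g, 0 < g &
    forall i, (i < p)%N -> forall g', 0 < g' -> g' <= g -> Q i g'.
  apply: (IH (fun i g => forall g', 0 < g' -> g' <= g -> Q i g')) => i ip.
  have [g g_gt0 Hg] := Qthr i (ltnW ip).
  by exists g => // g' _ g'g g'' g''_gt0 g''g'; apply: Hg (le_trans g''g' g'g).
have [g2 g2_gt0 Hg2] := Qthr p (ltnSn p).
have g_gt0 : 0 < Num.min g1 g2 by rewrite lt_min g1_gt0.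
exists (Num.min g1 g2) => // i; rewrite ltnS leq_eqVlt => /predU1P[->|ip].
  by apply: Hg2; rewrite ?ge_min ?lexx ?orbT.
by apply: Hg1; rewrite ?ge_min ?lexx.
Qed.

Lemma div_nat_le_eventually (a eps : R) : 0 < eps ->
  exists N1, forall N, (N1 <= N)%N -> a / N%:R <= eps.
Proof.
move=> eps_gt0; have a_ge0 : 0 <= `|a| / eps by rewrite divr_ge0 // ltW.
exists (Num.Def.archi_bound (`|a| / eps)).+1 => N N1N.
have N_gt : `|a| / eps < N%:R.
  by apply: lt_le_trans (archi_boundP a_ge0) _; rewrite ler_nat ltnW.
have N_pos : 0 < N%:R :> R by apply: le_lt_trans N_gt.
have : `|a| <= eps * N%:R by move: N_gt; rewrite ltr_pdivrMr // mulrC => /ltW.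
by rewrite ler_pdivrMr //; apply: le_trans (ler_norm a).
Qed.

Lemma lipschitz_continuous (g : R -> R) (k : R) : 0 < k ->
  (forall a b, `|g a - g b| <= k * `|a - b|) -> continuous g.
Proof.
move=> k_gt0 g_lip x; apply/cvgrPdist_lt => e e_gt0.
apply/nbhs_ballP; exists (e / k) => /=; first by rewrite divr_gt0.
move=> y; rewrite /ball_ /= => xy.
by apply: le_lt_trans (g_lip x y) _; rewrite -ltr_pdivlMl // mulrC.
Qed.

End Comparison.

Lemma within_continuous_ball (R : realType) (V1 V2 W : normedModType R)
    (g : V1 * V2 -> W) (A : set (V1 * V2)) z :
  {within A, continuous g} -> A z -> forall e, 0 < e ->
  exists2 r, 0 < r & forall w, A w ->
    `|z.1 - w.1| < r -> `|z.2 - w.2| < r -> `|g z - g w| < e.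
Proof.
move=> /subspace_continuousP g_cont Az e e_gt0.
have := g_cont z Az; move/cvg_ballP => /(_ e e_gt0).
rewrite /= near_withinE => /nbhs_ballP [r /= r_gt0 near_z].
exists r => // w Aw zw1 zw2.
have : ball z r w by split; rewrite /= -ball_normE.
by move=> /near_z /(_ Aw); rewrite /from_subspace -ball_normE.
Qed.

Section Trajectories.
Variables (R : realType) (n m : nat) (f : 'rV[R]_n -> 'rV[R]_m -> 'rV[R]_n)
  (X : set 'rV[R]_n) (U : set 'rV[R]_m).

Definition cost (c : 'rV[R]_n -> 'rV[R]_m -> R) N x u :=
  \sum_(k < N) betaN R N k * c (traj f u x k) (u k).

Definition lam_avg (lam : 'rV[R]_n -> R) N x u :=
  (\sum_(k < N) lam (traj f u x k.+1)) / N%:R.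

Lemma admissible_step N x u k : admissible f X U N x u -> (k < N)%N ->
  [/\ X (traj f u x k), U (u k) & X (traj f u x k.+1)].
Proof. by move=> [Uu Xx] kN; split; [apply/Xx/ltnW | apply: Uu | apply: Xx]. Qed.

Lemma cost_ge0 c N x u :
  (forall x u, X x -> U u -> X (f x u) -> 0 <= c x u) ->
  admissible f X U N x u -> 0 <= cost c N x u.
Proof.
move=> c_ge0 adm; apply: sumr_ge0 => k _.
by have [Xk Uk Xk1] := admissible_step adm (ltn_ord k); rewrite mulr_ge0 ?betaN_ge0 ?c_ge0.
Qed.

Lemma cost_ell_tilde ell ellstar lam N x u : (0 < N)%N ->
  cost (ell_tilde f ell ellstar lam) N x u =
  cost ell N x u - (N%:R + 1) / 2 * ellstar + lam x - lam_avg lam N x u.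
Proof.
move=> N_gt0; rewrite /cost /ell_tilde.
have -> : \sum_(k < N) betaN R N k * (ell (traj f u x k) (u k) - ellstar
      + lam (traj f u x k) - lam (f (traj f u x k) (u k))) =
    \sum_(k < N) betaN R N k * ell (traj f u x k) (u k)
    - (\sum_(k < N) betaN R N k) * ellstar
    + \sum_(k < N) betaN R N k * (lam (traj f u x k) - lam (traj f u x k.+1)).
  by rewrite mulr_suml -sumrB -big_split /=; apply: eq_bigr => k _; ring.
by rewrite sum_betaN // (sum_betaN_telescope (fun k => lam (traj f u x k))) // addrA.
Qed.

Lemma lam_avg_bound lam lambar N x u : (0 < N)%N ->
  (forall x, X x -> `|lam x| <= lambar) -> admissible f X U N x u ->
  `|lam_avg lam N x u| <= lambar.
Proof.
move=> N_gt0 lam_le adm; have N_pos : 0 < N%:R :> R by rewrite ltr0n.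
rewrite /lam_avg normrM normfV (gtr0_norm N_pos) ler_pdivrMr //.
apply: le_trans (ler_norm_sum _ _ _) _.
have -> : lambar * N%:R = \sum_(k < N) lambar by rewrite sumr_const card_ord mulr_natr.
apply: ler_sum => k _.
by have [_ _ Xk1] := admissible_step adm (ltn_ord k); apply: lam_le.
Qed.

Lemma VNbeta_le_cost c N x u :
  admissible f X U N x u -> (VNbeta f X U c N x <= (cost c N x u)%:E)%E.
Proof. by move=> adm; apply: ereal_inf_lbound; exists u. Qed.

Lemma VNbeta_ge c N x (a : R) :
  (forall u, admissible f X U N x u -> a <= cost c N x u) ->
  (a%:E <= VNbeta f X U c N x)%E.
Proof. by move=> H; apply: le_ereal_inf_tmp => _ [u adm <-]; rewrite lee_fin H. Qed.

Lemma VNbeta_lt c N x (a : R) : (VNbeta f X U c N x < a%:E)%E ->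
  exists2 u, admissible f X U N x u & cost c N x u < a.
Proof. by move/ereal_inf_lt => [_ [u adm <-]]; rewrite lte_fin; exists u. Qed.

End Trajectories.

Section Majorant.
Variables (R : realType) (P : nat -> R -> Prop) (Mb : R).
Hypothesis Mb_ge0 : 0 <= Mb.
Hypothesis P_le : forall N v, P N v -> v <= Mb.
Hypothesis P_small : forall e, 0 < e ->
  exists N1, forall N v, (N1 <= N)%N -> P N v -> v <= e.

(* Penalising each value by the distance (r - N)_+ makes the supremum
   1-Lipschitz in r. *)
Definition tail_set r :=
  [set y | y = 0 \/ exists N v, P N v /\ y = v - Num.max 0 (r - N%:R)].

Definition tail_sup r := sup (tail_set r).

Lemma tail_set_ub r : ubound (tail_set r) Mb.
Proof.
move=> _ [->//|[N [v [Pv ->]]]].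
by apply: le_trans (P_le Pv); rewrite lerBlDr lerDl le_max lexx.
Qed.

Lemma le_tail_sup r y : tail_set r y -> y <= tail_sup r.
Proof. by apply: ub_le_sup; exists Mb; apply: tail_set_ub. Qed.

Lemma tail_sup_le r a : (forall y, tail_set r y -> y <= a) -> tail_sup r <= a.
Proof. by apply: ge_sup; exists 0; left. Qed.

Lemma tail_sup_ge N v : P N v -> v <= tail_sup N%:R.
Proof.
by move=> Pv; apply: le_tail_sup; right; exists N, v; rewrite subrr maxxx subr0.
Qed.

Lemma tail_sup_ge0 r : 0 <= tail_sup r.
Proof. by apply: le_tail_sup; left. Qed.

Lemma tail_sup_lipschitz a b : tail_sup a <= tail_sup b + `|a - b|.
Proof.
apply: tail_sup_le => _ [->|[N [v [Pv ->]]]].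
  by rewrite addr_ge0 ?tail_sup_ge0.
have : v - Num.max 0 (b - N%:R) <= tail_sup b by apply: le_tail_sup; right; exists N, v.
have : Num.max 0 (b - N%:R) <= Num.max 0 (a - N%:R) + `|a - b|.
  rewrite ge_max addr_ge0 ?le_max ?lexx //=.
  have : a - N%:R <= Num.max 0 (a - N%:R) by rewrite le_max lexx orbT.
  have : b - a <= `|a - b| by rewrite distrC ler_norm.
  lra.
lra.
Qed.

Lemma tail_sup_nonincreasing a b : a <= b -> tail_sup b <= tail_sup a.
Proof.
move=> ab; apply: tail_sup_le => _ [->|[N [v [Pv ->]]]]; first exact: tail_sup_ge0.
have : v - Num.max 0 (a - N%:R) <= tail_sup a by apply: le_tail_sup; right; exists N, v.
have : Num.max 0 (a - N%:R) <= Num.max 0 (b - N%:R).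
  by rewrite ge_max le_max lexx /= le_max; apply/orP; right; lra.
lra.
Qed.

Lemma tail_sup_small e : 0 < e -> exists T, forall r, T <= r -> tail_sup r <= e.
Proof.
move=> e_gt0; have [N1 small] := P_small e_gt0.
exists (N1%:R + Mb) => r Tr; apply: tail_sup_le => _ [->|[N [v [Pv ->]]]].
  exact: ltW.
have : r - N%:R <= Num.max 0 (r - N%:R) by rewrite le_max lexx orbT.
have : 0 <= Num.max 0 (r - N%:R) by rewrite le_max lexx.
have [N1N|NN1] := leqP N1 N; first by have := small N v N1N Pv; lra.
have : N%:R <= N1%:R :> R by rewrite ler_nat ltnW.
have := P_le Pv; lra.
Qed.

End Majorant.

Section ClassL.
Variable R : realType.

Lemma inv1pnorm_lipschitz (a b : R) :
  `|(1 + `|a|)^-1 - (1 + `|b|)^-1| <= `|a - b|.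
Proof.
have a1 : 1 <= 1 + `|a| by rewrite lerDl.
have b1 : 1 <= 1 + `|b| by rewrite lerDl.
have ab_pos : 0 < (1 + `|a|) * (1 + `|b|) by rewrite mulr_gt0 ?(lt_le_trans ltr01).
have -> : (1 + `|a|)^-1 - (1 + `|b|)^-1 = (`|b| - `|a|) / ((1 + `|a|) * (1 + `|b|)).
  by field; rewrite !gt_eqF ?(lt_le_trans ltr01).
rewrite normrM normfV (gtr0_norm ab_pos) ler_pdivrMr //.
apply: le_trans (ler_dist_dist _ _) _; rewrite distrC -[X in X <= _]mulr1 ler_wpM2l //.
by rewrite -[X in X <= _](mulr1 1) ler_pM ?ler01.
Qed.

Lemma classL_add_inv1pnorm (d : R -> R) :
  (forall a b, `|d a - d b| <= `|a - b|) -> (forall r, 0 <= d r) ->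
  (forall a b, a <= b -> d b <= d a) ->
  (forall e, 0 < e -> exists T, forall r, T <= r -> d r <= e) ->
  classL (fun r => d r + (1 + `|r|)^-1).
Proof.
move=> d_lip d_ge0 d_noninc d_small.
have inv_gt0 (r : R) : 0 < (1 + `|r|)^-1 by rewrite invr_gt0 ltr_wpDr.
split; [|split; [|split]].
- apply: continuous_subspaceT; apply: (@lipschitz_continuous _ _ 2) => // a b.
  have -> : d a + (1 + `|a|)^-1 - (d b + (1 + `|b|)^-1) =
      d a - d b + ((1 + `|a|)^-1 - (1 + `|b|)^-1) by rewrite opprD addrACA.
  have := ler_normD (d a - d b) ((1 + `|a|)^-1 - (1 + `|b|)^-1).
  have := d_lip a b; have := inv1pnorm_lipschitz a b; lra.
- by move=> r _; rewrite addr_ge0 ?d_ge0 ?ltW.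
- move=> r s r_ge0 rs; have s_ge0 := le_trans r_ge0 (ltW rs).
  apply: ler_ltD; first exact/d_noninc/ltW.
  have pos (t : R) : 1 + `|t| \is Num.pos by rewrite posrE ltr_wpDr.
  by rewrite ltf_pV2 ?pos // ltrD2l !ger0_norm.
- apply/cvgrPdist_le => e e_gt0.
  have [T small] := d_small (e / 2) (divr_gt0 e_gt0 (ltr0n _ 2)).
  near=> r.
  have r_ge : Num.max T (2 / e) <= r by near: r; apply: nbhs_pinfty_ge; apply: num_real.
  rewrite ge_max in r_ge; have /andP[Tr er] := r_ge.
  have r_ge0 : 0 <= r by apply: le_trans er; rewrite divr_ge0 ?ltW.
  have inv_le : (1 + `|r|)^-1 <= e / 2.
    rewrite ger0_norm // -[e / 2]invf_div lef_pV2 ?posrE ?divr_gt0 ?ltr_wpDr //.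
    lra.
  have := small r Tr.
  by rewrite sub0r normrN (ger0_norm (addr_ge0 (d_ge0 r) (ltW (inv_gt0 r)))); lra.
Unshelve. all: by end_near.
Qed.

End ClassL.

Lemma classL_majorant (R : realType) (P : nat -> R -> Prop) (Mb : R) :
  0 <= Mb -> (forall N v, P N v -> v <= Mb) ->
  (forall e, 0 < e -> exists N1, forall N v, (N1 <= N)%N -> P N v -> v <= e) ->
  exists d, classL d /\ forall N v, P N v -> v <= d N%:R.
Proof.
move=> Mb_ge0 P_le P_small.
exists (fun r => tail_sup P r + (1 + `|r|)^-1); split.
  apply: classL_add_inv1pnorm.
  - move=> a b; rewrite ler_norml; apply/andP; split.
      by have := tail_sup_lipschitz Mb_ge0 P_le b a; rewrite distrC; lra.
    by have := tail_sup_lipschitz Mb_ge0 P_le a b; lra.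
  - exact: tail_sup_ge0 Mb_ge0 P_le.
  - exact: tail_sup_nonincreasing Mb_ge0 P_le.
  - exact: tail_sup_small P_le P_small.
move=> N v Pv; apply: le_trans (tail_sup_ge Mb_ge0 P_le Pv) _.
by rewrite lerDl invr_ge0 addr_ge0.
Qed.

Section Orbit.
Variables (R : realType) (n m : nat) (f : 'rV[R]_n -> 'rV[R]_m -> 'rV[R]_n)
  (X : set 'rV[R]_n) (U : set 'rV[R]_m)
  (p : nat) (Pi : nat -> 'rV[R]_n * 'rV[R]_m).
Hypothesis HPi : feasible_orbit f X U p Pi.

Lemma orbit_period_gt0 : (0 < p)%N.
Proof. by case: HPi. Qed.

Lemma pnorm_ge_l (a : 'rV[R]_n) (b : 'rV[R]_m) : `|a| <= pnorm (a, b).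
Proof. by rewrite /pnorm le_max lexx. Qed.

Lemma pnorm_ge_r (a : 'rV[R]_n) (b : 'rV[R]_m) : `|b| <= pnorm (a, b).
Proof. by rewrite /pnorm le_max lexx orbT. Qed.

Lemma dist_orbit_ge z d :
  (forall j, (j < p)%N -> d <= pnorm (z.1 - (Pi j).1, z.2 - (Pi j).2)) ->
  d <= dist_orbit p Pi z.
Proof.
move=> d_le; apply: (big_ind (fun v => d <= v)); first exact: d_le orbit_period_gt0.
  by move=> a b da db; rewrite le_min da db.
by move=> j _; apply: d_le.
Qed.

Lemma dist_orbit_ge0 z : 0 <= dist_orbit p Pi z.
Proof. by apply: dist_orbit_ge => j _; apply: le_trans (pnorm_ge_l _ _). Qed.

Definition orbit_separated g := forall i k, (i < p)%N -> (k < p)%N -> i <> k ->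
  2 * g <= `|(Pi i).1 - (Pi k).1|.

Lemma exists_orbit_separated :
  minimal_orbit p Pi -> exists2 g, 0 < g & orbit_separated g.
Proof.
move=> Pi_min.
suff [g g_gt0 sep] : exists2 g, 0 < g & forall i, (i < p)%N ->
    forall k, (k < p)%N -> i <> k -> 2 * g <= `|(Pi i).1 - (Pi k).1|.
  by exists g => // i k ip; apply: sep.
apply: uniform_threshold => i ip.
have [g g_gt0 sep_i] : exists2 g, 0 < g &
    forall k, (k < p)%N -> i <> k -> 2 * g <= `|(Pi i).1 - (Pi k).1|.
  apply: uniform_threshold => k kp.
  have [<-|ik] := eqVneq i k; first by exists 1 => // g' _ _ [].
  have Pi_ik : (Pi i).1 != (Pi k).1.
    by apply/eqP => Pi_eq; rewrite (Pi_min _ _ ip kp Pi_eq) eqxx in ik.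
  exists (`|(Pi i).1 - (Pi k).1| / 2); first by rewrite divr_gt0 // normr_gt0 subr_eq0.
  by move=> g' _ g'g _; rewrite -ler_pdivlMl // mulrC.
exists g => // g' _ g'g k kp ik.
by apply: le_trans (sep_i k kp ik); rewrite ler_pM2l.
Qed.

Definition orbit_step_within g r := forall j, (j < p)%N -> forall x u, X x -> U u ->
  pnorm (x - (Pi j).1, u - (Pi j).2) < r -> `|f x u - (Pi (j.+1 %% p)).1| < g.

Lemma exists_orbit_step_within g :
  {within [set z | X z.1 /\ U z.2], continuous (fun z => f z.1 z.2)} ->
  0 < g -> exists2 r, 0 < r & orbit_step_within g r.
Proof.
move=> f_cont g_gt0; case: HPi => _ [Pi_in Pi_step].
apply: uniform_threshold => j jp.
have [r r_gt0 f_near] := within_continuous_ball f_cont (Pi_in j jp) g_gt0.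
exists r => // r' _ r'r x u Xx Uu xu_near.
rewrite Pi_step // distrC; apply: (f_near (x, u)) => //=; rewrite distrC.
  exact: lt_le_trans (le_lt_trans (pnorm_ge_l _ _) xu_near) r'r.
exact: lt_le_trans (le_lt_trans (pnorm_ge_r _ _) xu_near) r'r.
Qed.

Variables (lam : 'rV[R]_n -> R) (lambar : R).
Hypothesis lam_le : forall x, X x -> `|lam x| <= lambar.

Definition lamstar := avg_cost (fun x _ => lam x) p Pi.

Lemma lambar_ge0 : 0 <= lambar.
Proof.
case: HPi => p_gt0 [Pi_in _]; have [X0 _] := Pi_in 0%N p_gt0.
exact: le_trans (normr_ge0 _) (lam_le X0).
Qed.

Lemma lamstar_bound : `|lamstar| <= lambar.
Proof.
case: HPi => p_gt0 [Pi_in _]; have p_pos : 0 < p%:R :> R by rewrite ltr0n.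
rewrite /lamstar /avg_cost normrM normfV (gtr0_norm p_pos) ler_pdivrMr //.
apply: le_trans (ler_norm_sum _ _ _) _.
have -> : lambar * p%:R = \sum_(i < p) lambar by rewrite sumr_const card_ord mulr_natr.
by apply: ler_sum => i _; apply: lam_le; case: (Pi_in i (ltn_ord i)).
Qed.

(* lambda - lamstar is a coboundary along the orbit: its value at Pi j is the
   increment of these partial sums from j to j + 1 mod p. *)
Definition orbit_lam_sum j := \sum_(i < j) (lam (Pi i).1 - lamstar).

Lemma orbit_lam_sum_step j : (j < p)%N ->
  orbit_lam_sum (j.+1 %% p) - orbit_lam_sum j = lam (Pi j).1 - lamstar.
Proof.
move=> jp; have sumS : orbit_lam_sum j.+1 = orbit_lam_sum j + (lam (Pi j).1 - lamstar).
  by rewrite /orbit_lam_sum big_ord_recr.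
move: jp; rewrite leq_eqVlt => /predU1P[jp|jp]; last by rewrite modn_small // sumS addrC addKr.
have sum_p : orbit_lam_sum p = 0.
  have p_neq0 : p%:R != 0 :> R by rewrite pnatr_eq0 -lt0n orbit_period_gt0.
  rewrite /orbit_lam_sum big_split sumrN sumr_const card_ord /lamstar /avg_cost /=.
  by rewrite -[X in _ - X]mulr_natr divfK // subrr.
rewrite jp modnn; rewrite -jp sumS in sum_p; move/eqP: sum_p; rewrite addr_eq0 => /eqP ->.
by rewrite /orbit_lam_sum big_ord0 sub0r opprK.
Qed.

Definition corrector g x :=
  \sum_(j < p) (if `|x - (Pi j).1| < g then orbit_lam_sum j else 0).

Definition corrector_max := \sum_(j < p) `|orbit_lam_sum j|.

Lemma corrector_max_ge0 : 0 <= corrector_max.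
Proof. by apply: sumr_ge0 => j _. Qed.

Lemma corrector_bound g x : `|corrector g x| <= corrector_max.
Proof.
apply: le_trans (ler_norm_sum _ _ _) _; apply: ler_sum => j _.
by case: ifP; rewrite ?normr0.
Qed.

Lemma corrector_eq g x j : orbit_separated g -> (j < p)%N ->
  `|x - (Pi j).1| < g -> corrector g x = orbit_lam_sum j.
Proof.
move=> sep jp xj; rewrite /corrector (bigD1 (Ordinal jp)) //= xj big1 ?addr0 //.
move=> i /eqP ij; case: ifP => // xi; exfalso.
have /negP : ~~ (2 * g <= `|(Pi i).1 - (Pi j).1|).
  rewrite -ltNge (_ : (Pi i).1 - (Pi j).1 = (x - (Pi j).1) - (x - (Pi i).1)).
    by apply: le_lt_trans (ler_normB _ _) _; rewrite mulr2n mulrDl mul1r ltrD.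
  by rewrite opprB [RHS]addrC addrA subrK.
by apply; apply: sep => // ij_val; apply: ij; apply: val_inj.
Qed.

End Orbit.

Section Averaging.
Variables (R : realType) (n m : nat) (f : 'rV[R]_n -> 'rV[R]_m -> 'rV[R]_n)
  (X : set 'rV[R]_n) (U : set 'rV[R]_m)
  (p : nat) (Pi : nat -> 'rV[R]_n * 'rV[R]_m)
  (lam : 'rV[R]_n -> R) (lambar : R)
  (alpha alam : R -> R) (c : 'rV[R]_n -> 'rV[R]_m -> R).
Hypothesis HPi : feasible_orbit f X U p Pi.
Hypothesis lam_le : forall x, X x -> `|lam x| <= lambar.
Hypotheses (Halpha : Kinf alpha) (Halam : Kinf alam).
Hypothesis c_ge_alpha : forall x u, X x -> U u -> X (f x u) ->
  alpha (dist_orbit p Pi (x, u)) <= c x u.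
Hypothesis lam_near_orbit : forall x k, X x -> (k < p)%N ->
  `|lam x - lam (Pi k).1| <= alam `|x - (Pi k).1|.

Local Notation lamstar := (lamstar p Pi lam).
Local Notation corrector := (corrector p Pi lam).
Local Notation HH := (corrector_max p Pi lam).
Local Notation K := (2 * lambar + 2 * HH).

Definition lam_defect g x u :=
  lam x - lamstar - (corrector g (f x u) - corrector g x).

Lemma c_ge0 x u : X x -> U u -> X (f x u) -> 0 <= c x u.
Proof.
move=> Xx Uu Xf; apply: le_trans (c_ge_alpha Xx Uu Xf).
by apply: Kinf_ge0 => //; apply: dist_orbit_ge0 HPi _.
Qed.

Lemma lam_defect_dichotomy g r d x u :
  orbit_separated p Pi g -> orbit_step_within f X U p Pi g r ->
  0 < d -> d <= g -> d <= r -> X x -> U u -> X (f x u) ->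
  `|lam_defect g x u| <= alam d \/ `|lam_defect g x u| <= K /\ alpha d <= c x u.
Proof.
move=> sep step d_gt0 dg dr Xx Uu Xf.
have [[j [jp xu_near]]|far] := pselect (exists j,
    (j < p)%N /\ pnorm (x - (Pi j).1, u - (Pi j).2) < d); [left|right; split].
- have x_near : `|x - (Pi j).1| < d := le_lt_trans (pnorm_ge_l _ _) xu_near.
  have fx_near := step j jp x u Xx Uu (lt_le_trans xu_near dr).
  rewrite /lam_defect (corrector_eq _ sep jp (lt_le_trans x_near dg)).
  rewrite (corrector_eq _ sep (ltn_pmod _ (orbit_period_gt0 HPi)) fx_near).
  rewrite (orbit_lam_sum_step HPi) // opprB addrA subrK.
  exact: le_trans (lam_near_orbit Xx jp) (Kinf_le Halam (normr_ge0 _) (ltW x_near)).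
- rewrite /lam_defect; apply: le_trans (ler_normB _ _) _.
  rewrite mulr2n mulrDl mul1r lerD //; apply: le_trans (ler_normB _ _) _.
    by rewrite lerD ?lam_le ?(lamstar_bound HPi lam_le).
  by rewrite mulrDl mul1r lerD ?corrector_bound.
- apply: le_trans (c_ge_alpha Xx Uu Xf); apply: Kinf_le (ltW d_gt0) _ => //.
  apply: (dist_orbit_ge HPi) => j jp; rewrite leNgt; apply/negP => near.
  by apply: far; exists j.
Qed.

Lemma lam_avg_dev_defects g N x u : (0 < N)%N -> admissible f X U N x u ->
  `|lam_avg f lam N x u - lamstar| * N%:R <=
  \sum_(k < N) `|lam_defect g (traj f u x k) (u k)| + 2 * HH + 2 * lambar.
Proof.
move=> N_gt0 adm; pose xs := traj f u x.
have sumE : (lam_avg f lam N x u - lamstar) * N%:R =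
    \sum_(k < N) lam_defect g (xs k) (u k)
    + (corrector g (xs N) - corrector g (xs 0%N)) + (lam (xs N) - lam (xs 0%N)).
  rewrite -(telescope_sumr (fun k => corrector g (xs k)) (leq0n N)).
  rewrite -(telescope_sumr (fun k => lam (xs k)) (leq0n N)) !big_mkord.
  rewrite /lam_avg mulrBl divfK ?pnatr_eq0 -?lt0n //.
  have -> : lamstar * N%:R = \sum_(k < N) lamstar by rewrite sumr_const card_ord mulr_natr.
  by rewrite -sumrB -!big_split; apply: eq_bigr => k _ /=; rewrite /lam_defect; ring.
have corr_bd : `|corrector g (xs N) - corrector g (xs 0%N)| <= 2 * HH.
  by apply: le_trans (ler_normB _ _) _; rewrite mulr2n mulrDl mul1r lerD ?corrector_bound.
have lam_bd : `|lam (xs N) - lam (xs 0%N)| <= 2 * lambar.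
  have [_ Xxs] := adm; apply: le_trans (ler_normB _ _) _.
  by rewrite mulr2n mulrDl mul1r; apply: lerD; apply/lam_le/Xxs.
rewrite -(ger0_norm (ler0n _ N)) -normrM sumE.
have : `|\sum_(k < N) lam_defect g (xs k) (u k)| <=
    \sum_(k < N) `|lam_defect g (xs k) (u k)| := ler_norm_sum _ _ _.
have := ler_normD (\sum_(k < N) lam_defect g (xs k) (u k))
  (corrector g (xs N) - corrector g (xs 0%N)).
have := ler_normD (\sum_(k < N) lam_defect g (xs k) (u k)
  + (corrector g (xs N) - corrector g (xs 0%N))) (lam (xs N) - lam (xs 0%N)).
lra.
Qed.

Lemma lam_avg_dev_le g r d M N x u B :
  orbit_separated p Pi g -> orbit_step_within f X U p Pi g r ->
  0 < d -> d <= g -> d <= r -> (0 < M)%N -> (0 < N)%N ->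
  admissible f X U N x u -> cost f c N x u <= B ->
  `|lam_avg f lam N x u - lamstar| <=
    alam d + K * B / alpha d / M%:R + (K * M%:R + 2 * HH + 2 * lambar) / N%:R.
Proof.
move=> sep step d_gt0 dg dr M_gt0 N_gt0 adm costB.
have alpha_d : 0 < alpha d by apply: Kinf_gt0.
have sum_defects : \sum_(k < N) `|lam_defect g (traj f u x k) (u k)| <=
    N%:R * alam d + K * (N%:R / (M%:R * alpha d) * B + M%:R).
  apply: (sum_dichotomy_le (e := fun k => lam_defect g (traj f u x k) (u k))
    (c := fun k => c (traj f u x k) (u k))) => //.
  - exact: Kinf_ge0 (ltW d_gt0).
  - by rewrite addr_ge0 ?mulr_ge0 ?(lambar_ge0 HPi lam_le) ?corrector_max_ge0.
  - by move=> k kN; have [Xk Uk Xk1] := admissible_step adm kN; apply: c_ge0.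
  - move=> k kN; have [Xk Uk Xk1] := admissible_step adm kN.
    exact: lam_defect_dichotomy sep step d_gt0 dg dr Xk Uk Xk1.
rewrite -(ler_pM2r (_ : 0 < N%:R)) ?ltr0n //.
apply: le_trans (lam_avg_dev_defects g N_gt0 adm) _.
have -> : (alam d + K * B / alpha d / M%:R
      + (K * M%:R + 2 * HH + 2 * lambar) / N%:R) * N%:R =
    N%:R * alam d + K * (N%:R / (M%:R * alpha d) * B + M%:R)
      + 2 * HH + 2 * lambar.
  by field; rewrite !gt_eqF ?ltr0n.
lra.
Qed.

Hypothesis Pi_min : minimal_orbit p Pi.
Hypothesis f_cont :
  {within [set z | X z.1 /\ U z.2], continuous (fun z => f z.1 z.2)}.

Theorem lam_avg_cvg B e : 0 < e -> exists N1, forall N x u, (N1 <= N)%N ->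
  admissible f X U N x u -> cost f c N x u <= B ->
  `|lam_avg f lam N x u - lamstar| <= e.
Proof.
move=> e_gt0; have e3_gt0 : 0 < e / 3 by rewrite divr_gt0.
have [g g_gt0 sep] := exists_orbit_separated Pi_min.
have [r r_gt0 step] := exists_orbit_step_within HPi f_cont g_gt0.
have gr_gt0 : 0 < Num.min g r by rewrite lt_min g_gt0.
have [d [d_gt0 d_le alam_d]] := Kinf_small Halam e3_gt0 gr_gt0.
have [M0 M_big] := div_nat_le_eventually (K * B / alpha d) e3_gt0.
pose M := maxn 1 M0.
have [N0 N_big] := div_nat_le_eventually (K * M%:R + 2 * HH + 2 * lambar) e3_gt0.
exists (maxn 1 N0) => N x u; rewrite geq_max => /andP[N_gt0 N0N] adm costB.
apply: le_trans (lam_avg_dev_le (M := M) sep step d_gt0 _ _ _ N_gt0 adm costB) _.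
- by apply: le_trans d_le _; rewrite ge_min lexx.
- by apply: le_trans d_le _; rewrite ge_min lexx orbT.
- by rewrite leq_maxl.
- by have := M_big M (leq_maxr 1 M0); have := N_big N N0N; lra.
Qed.

Corollary lam_avg_gap_majorant B : exists d, classL d /\
  forall N x ux y uy, (0 < N)%N ->
    admissible f X U N x ux -> admissible f X U N y uy ->
    cost f c N x ux <= B -> cost f c N y uy <= B ->
    lam_avg f lam N x ux - lam_avg f lam N y uy <= d N%:R.
Proof.
pose P N v := (0 < N)%N /\ exists x ux y uy, [/\
  admissible f X U N x ux, admissible f X U N y uy,
  cost f c N x ux <= B, cost f c N y uy <= B &
  v = lam_avg f lam N x ux - lam_avg f lam N y uy].
have [|||d [dL d_maj]] := @classL_majorant R P (2 * lambar).
- by rewrite mulr_ge0 ?(lambar_ge0 HPi lam_le).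
- move=> N _ [N_gt0 [x [ux [y [uy [admx admy _ _ ->]]]]]].
  have := lam_avg_bound N_gt0 lam_le admx; have := lam_avg_bound N_gt0 lam_le admy.
  rewrite !ler_norml => /andP[? ?] /andP[? ?]; lra.
- move=> e e_gt0; have [N1 cvg] := lam_avg_cvg B (divr_gt0 e_gt0 (ltr0n _ 2)).
  exists N1 => N _ N1N [_ [x [ux [y [uy [admx admy cx cy ->]]]]]].
  have := cvg N x ux N1N admx cx; have := cvg N y uy N1N admy cy.
  rewrite !ler_norml => /andP[? ?] /andP[? ?]; lra.
exists d; split => // N x ux y uy N_gt0 admx admy cx cy.
by apply: d_maj; split => //; exists x, ux, y, uy.
Qed.

End Averaging.

Section RotatedValue.
Variables (R : realType) (n m : nat) (f : 'rV[R]_n -> 'rV[R]_m -> 'rV[R]_n)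
  (X : set 'rV[R]_n) (U : set 'rV[R]_m) (ell : 'rV[R]_n -> 'rV[R]_m -> R)
  (ellstar : R) (lam : 'rV[R]_n -> R) (lambar C : R) (N : nat).
Hypothesis ell_ge0 : forall x u, X x -> U u -> 0 <= ell x u.
Hypothesis ellt_ge0 : forall x u, X x -> U u -> X (f x u) ->
  0 <= ell_tilde f ell ellstar lam x u.
Hypothesis lam_le : forall x, X x -> `|lam x| <= lambar.
Hypothesis N_gt0 : (0 < N)%N.

Local Notation ellt := (ell_tilde f ell ellstar lam).
Local Notation cN := ((N%:R + 1) / 2 * ellstar).
Local Notation within_budget z :=
  (VNbeta f X U ell N z + (- cN + lam z + lambar)%:E <= C%:E)%E.

Lemma VNbeta_fin_budget z : within_budget z ->
  exists2 v, VNbeta f X U ell N z = v%:E & v - cN + lam z + lambar <= C.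
Proof.
have : (0%:E <= VNbeta f X U ell N z)%E.
  by apply: VNbeta_ge => u; apply: cost_ge0 => x v Xx Uv _; apply: ell_ge0.
case: (VNbeta f X U ell N z) => [v _ | // | //].
by rewrite -EFinD lee_fin !addrA => budget; exists v.
Qed.

Lemma cost_ell_tilde_le z v u : v - cN + lam z + lambar <= C ->
  admissible f X U N z u -> cost f ell N z u <= v + 1 -> cost f ellt N z u <= C + 1.
Proof.
move=> v_le adm cost_le; rewrite cost_ell_tilde //.
have := lam_avg_bound N_gt0 lam_le adm; rewrite ler_norml => /andP[? _]; lra.
Qed.

Lemma VNbeta_tilde_fin_budget z : within_budget z ->
  exists2 w, VNbeta f X U ellt N z = w%:E & w <= C + 1.
Proof.
move=> budget; have [v Vz v_le] := VNbeta_fin_budget budget.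
have [u adm cost_lt] : exists2 u, admissible f X U N z u & cost f ell N z u < v + 1.
  by apply: VNbeta_lt; rewrite Vz lte_fin ltrDl.
have ub := VNbeta_le_cost ellt adm.
have : (0%:E <= VNbeta f X U ellt N z)%E by apply: VNbeta_ge => u'; apply: cost_ge0.
move: ub; case: (VNbeta f X U ellt N z) => [w | // | //] ub _; exists w => //.
apply: le_trans (cost_ell_tilde_le v_le adm (ltW cost_lt)).
by rewrite -lee_fin.
Qed.

(* Near-optimal inputs for V at y and for the rotated value at x, both of
   bounded rotated cost, turn the gap into a difference of lambda-averages. *)
Lemma rotated_value_gap_le x y (d : R) : within_budget x -> within_budget y ->
  (forall ux uy, admissible f X U N x ux -> admissible f X U N y uy ->
     cost f ellt N x ux <= C + 2 -> cost f ellt N y uy <= C + 2 ->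
     lam_avg f lam N x ux - lam_avg f lam N y uy <= d) ->
  (VNbeta f X U ellt N y - (lam y)%:E - VNbeta f X U ellt N x + (lam x)%:E
     <= VNbeta f X U ell N y - VNbeta f X U ell N x + d%:E)%E.
Proof.
move=> budget_x budget_y gap.
have [vx Vx _] := VNbeta_fin_budget budget_x.
have [vy Vy vy_le] := VNbeta_fin_budget budget_y.
have [wx Wx wx_le] := VNbeta_tilde_fin_budget budget_x.
have [wy Wy _] := VNbeta_tilde_fin_budget budget_y.
rewrite Vx Vy Wx Wy -!EFinB -!EFinD lee_fin.
suff slack e : 0 < e -> e <= 1 -> wy - lam y - wx + lam x <= vy - vx + d + 2 * e.
  apply/ler_addgt0Pr => e e_gt0.
  have min_le1 : Num.min e 1 <= 1 by rewrite ge_min lexx orbT.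
  have min_le : Num.min e 1 <= e by rewrite ge_min lexx.
  have e1_gt0 : 0 < Num.min e 1 / 2 by rewrite divr_gt0 // lt_min e_gt0 ltr01.
  apply: le_trans (slack _ e1_gt0 _) _; first by rewrite ler_pdivrMr //; lra.
  by rewrite lerD2l mulrC divfK.
move=> e_gt0 e_le1.
have [uy admy cost_y] : exists2 u, admissible f X U N y u & cost f ell N y u < vy + e.
  by apply: VNbeta_lt; rewrite Vy lte_fin ltrDl.
have [ux admx cost_x] : exists2 u, admissible f X U N x u & cost f ellt N x u < wx + e.
  by apply: VNbeta_lt; rewrite Wx lte_fin ltrDl.
have wy_le : wy <= cost f ellt N y uy by rewrite -lee_fin -Wy VNbeta_le_cost.
have vx_le : vx <= cost f ell N x ux by rewrite -lee_fin -Vx VNbeta_le_cost.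
have cy : cost f ellt N y uy <= C + 2.
  by apply: le_trans (cost_ell_tilde_le vy_le admy _) _; lra.
have cx : cost f ellt N x ux <= C + 2 by lra.
have := gap ux uy admx admy cx cy.
rewrite !cost_ell_tilde // in wy_le cost_x; lra.
Qed.

End RotatedValue.

Theorem lemma29 (R : realType) (n m : nat)
  (f : 'rV[R]_n -> 'rV[R]_m -> 'rV[R]_n) (ell : 'rV[R]_n -> 'rV[R]_m -> R)
  (X : set 'rV[R]_n) (U : set 'rV[R]_m)
  (pstar : nat) (Pistar : nat -> 'rV[R]_n * 'rV[R]_m)
  (lam : 'rV[R]_n -> R) (lambar : R) (C : R)
  (* (A1) *)
  (HXc : compact X) (HUc : compact U)
  (Hfc : {within [set z | X z.1 /\ U z.2], continuous (fun z => f z.1 z.2)})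
  (Hlc : {within [set z | X z.1 /\ U z.2], continuous (fun z => ell z.1 z.2)})
  (* standing: ell nonnegative *)
  (Hl0 : forall x u, X x -> U u -> 0 <= ell x u)
  (* Pi* is a feasible p*-periodic orbit attaining l* *)
  (HPi : feasible_orbit f X U pstar Pistar)
  (HPiopt : forall p Pi, feasible_orbit f X U p Pi ->
      avg_cost ell pstar Pistar <= avg_cost ell p Pi)
  (* Pi* minimal *)
  (HPimin : minimal_orbit pstar Pistar)
  (* (A3) *)
  (Hlambar : forall x, X x -> `|lam x| <= lambar)
  (HA3 : exists alpha, Kinf alpha /\
     forall x u, X x -> U u -> X (f x u) ->
       alpha (dist_orbit pstar Pistar (x, u))
         <= ell_tilde f ell (avg_cost ell pstar Pistar) lam x u)
  (* (A4) *)
  (HA4 : exists (kappa : R) (M' : nat) (rho : R -> R),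
     0 < kappa /\ Kinf rho /\
     forall j x y, (j < pstar)%N -> X x -> X y ->
       `|x - (Pistar j).1| <= kappa -> `|y - (Pistar j).1| <= kappa ->
       exists u : nat -> 'rV[R]_m, admissible f X U M' x u /\
         traj f u x M' = y /\
         forall k, (k < M')%N ->
           dist_orbit pstar Pistar (traj f u x k, u k)
             <= rho (Num.max (dist_orbitX pstar Pistar x)
                             (dist_orbitX pstar Pistar y)))
  (* (A15) *)
  (HA15c : {within X, continuous lam})
  (HA15 : exists alpha_lam, Kinf alpha_lam /\
     forall x k, X x -> (k < pstar)%N ->
       `|lam x - lam (Pistar k).1| <= alpha_lam `|x - (Pistar k).1|) :
  exists (N0 : nat) (delta2 : R -> R), classL delta2 /\
    forall x y N,
      Xpi f X U ell (avg_cost ell pstar Pistar) lam lambar C N0 x ->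
      Xpi f X U ell (avg_cost ell pstar Pistar) lam lambar C N0 y ->
      (N0 <= N)%N ->
      (VNbeta f X U (ell_tilde f ell (avg_cost ell pstar Pistar) lam) N y
         - (lam y)%:E
         - VNbeta f X U (ell_tilde f ell (avg_cost ell pstar Pistar) lam) N x
         + (lam x)%:E
       <= VNbeta f X U ell N y - VNbeta f X U ell N x + (delta2 N%:R)%:E)%E.
Proof.
have [alpha [Halpha ellt_ge_alpha]] := HA3.
have [alam [Halam lam_near]] := HA15.
have [d [dL d_maj]] := lam_avg_gap_majorant HPi Hlambar Halpha Halam
  ellt_ge_alpha lam_near HPimin Hfc (C + 2).
exists 1%N, d; split => // x y N [_ budget_x] [_ budget_y] N_gt0.
apply: rotated_value_gap_le (budget_x N N_gt0) (budget_y N N_gt0) _ => //.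
- exact: c_ge0 HPi Halpha ellt_ge_alpha.
- by move=> ux uy admx admy cx cy; apply: d_maj.
Qed.
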